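(* Let $(X,\Sigma)$ be a test space with $X$ finite, and let $\mathrm{Pl}:E(X,\Sigma)\to D$ be a plausibility measure on it. Then the following are equivalent: (a) $\mathrm{Pl}$ agrees with some probability measure $\mu$ on $(X,\Sigma)$, meaning that for all events $A,B$ we have $\mathrm{Pl}(A)\preceq\mathrm{Pl}(B)$ if and only if $\mu(A)\le\mu(B)$; (b) the image of $\mathrm{Pl}$ is totally ordered by $\preceq$ and $\mathrm{Pl}$ is Archimedean.
   Context: A test space $(X,\Sigma)$ is a set $X$ of outcomes together with a set $\Sigma\subseteq 2^X$ of subsets (called tests) with $\bigcup_{T\in\Sigma}T=X$. An event is a subset of $X$ that is contained in some test, and $E(X,\Sigma)$ denotes the set of all events. A probability measure on $(X,\Sigma)$ is a function $\mu:X\to\mathbb{R}_{\ge0}$ with $\sum_{x\in T}\mu(x)=1$ for every $T\in\Sigma$. It is extended to events by $\mu(A)=\sum_{x\in A}\mu(x)$. A plausibility measure is a function $\mathrm{Pl}:E(X,\Sigma)\to D$, where $(D,\preceq)$ is a partially ordered set, satisfying three conditions: (i) $\mathrm{Pl}(T)=\mathrm{Pl}(R)$ for all $T,R\in\Sigma$; (ii) $A\subseteq B$ implies $\mathrm{Pl}(A)\preceq\mathrm{Pl}(B)$; (iii) $\mathrm{Pl}(\emptyset)\prec\mathrm{Pl}(T)$ for every $T\in\Sigma$. Here $a\prec b$ means $a\preceq b$ and $b\not\preceq a$. $\mathrm{Pl}$ is Archimedean if the following holds for every $n\ge1$ and every pair of finite families of events $(A_1,\dots,A_n)$ and $(B_1,\dots,B_n)$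 such that each outcome $x\in X$ belongs to the same number of the $A_i$ as of the $B_i$ (counted with multiplicity): whenever $\mathrm{Pl}(A_i)\preceq\mathrm{Pl}(B_i)$ for all $i=1,\dots,n-1$, then $\mathrm{Pl}(A_n)\succeq\mathrm{Pl}(B_n)$. *)

From HB Require Import structures.
From mathcomp Require Import all_boot all_order all_algebra.
Set Implicit Arguments. Unset Strict Implicit. Unset Printing Implicit Defensive.
Import Order.TTheory GRing.Theory Num.Theory.

Definition test_space (X : finType) (Sigma : {set {set X}}) : Prop :=
  \bigcup_(T in Sigma) T = [set: X].

Definition event (X : finType) (Sigma : {set {set X}}) (A : {set X}) : Prop :=
  exists2 T, T \in Sigma & A \subset T.

Definition prob_measure (R : realFieldType) (X : finType)
    (Sigma : {set {set X}}) (mu : X -> R) : Prop :=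
  (forall x, (0 <= mu x)%R) /\
  (forall T, T \in Sigma -> (\sum_(x in T) mu x)%R = 1%R).

Definition measure_of (R : realFieldType) (X : finType) (mu : X -> R)
    (A : {set X}) : R := (\sum_(x in A) mu x)%R.

(* Plausibility measure Pl : E(X,Sigma) -> D, D a partially ordered set.
   Pl is given as a total function on {set X}; only its values on events
   matter (all conditions quantify over events only). *)
Definition plausibility (disp : Order.disp_t) (D : porderType disp)
    (X : finType) (Sigma : {set {set X}}) (Pl : {set X} -> D) : Prop :=
  (forall T R, T \in Sigma -> R \in Sigma -> Pl T = Pl R) /\
  (forall A B, event Sigma A -> event Sigma B -> A \subset B ->
     (Pl A <= Pl B)%O) /\
  (forall T, T \in Sigma -> (Pl set0 < Pl T)%O).

Definition agrees (disp : Order.disp_t) (D : porderType disp)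
    (R : realFieldType) (X : finType) (Sigma : {set {set X}})
    (Pl : {set X} -> D) (mu : X -> R) : Prop :=
  forall A B, event Sigma A -> event Sigma B ->
    ((Pl A <= Pl B)%O <-> (measure_of mu A <= measure_of mu B)%R).

Definition image_total (disp : Order.disp_t) (D : porderType disp)
    (X : finType) (Sigma : {set {set X}}) (Pl : {set X} -> D) : Prop :=
  forall A B, event Sigma A -> event Sigma B ->
    (Pl A <= Pl B)%O \/ (Pl B <= Pl A)%O.

Definition archimedean (disp : Order.disp_t) (D : porderType disp)
    (X : finType) (Sigma : {set {set X}}) (Pl : {set X} -> D) : Prop :=
  forall (n : nat) (A B : 'I_n.+1 -> {set X}),
    (forall i, event Sigma (A i)) -> (forall i, event Sigma (B i)) ->
    (forall x : X, #|[set i | x \in A i]| = #|[set i | x \in B i]|) ->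
    (forall i : 'I_n.+1, i != ord_max -> (Pl (A i) <= Pl (B i))%O) ->
    (Pl (B ord_max) <= Pl (A ord_max))%O.

From HB Require Import structures.
From mathcomp Require Import all_boot all_order all_algebra.
From mathcomp Require Import ring lra.
Set Implicit Arguments. Unset Strict Implicit. Unset Printing Implicit Defensive.
Import Order.TTheory GRing.Theory Num.Theory.
Local Open Scope ring_scope.

(* If Pl agrees with mu, then over a balanced family of event pairs the sums
   of the mu A_i and of the mu B_i coincide, which is the Archimedean property.
   Conversely, view the weights of the outcomes as unknowns: every pair of
   events with Pl A <= Pl B gives a homogeneous integer inequality
   mu A <= mu B, strict when Pl A < Pl B.  By Fourier-Motzkin elimination
   (Motzkin's transposition theorem) this system has a real solution unless
   some positive integer combination of the inequalities, one of them strict,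
   has zero coefficients; such a combination is a balanced family of ordered
   pairs with a strict one, which the Archimedean property rules out.  With
   totality, the solution agrees with Pl, and dividing it by the common
   weight of the tests gives the probability measure. *)

Section Interval.
Variable R : realFieldType.

Lemma lteif_total (x y : R) C D :
  x < y ?<= if C || ~~ D \/ y < x ?<= if D || ~~ C.
Proof. by case: C D => [] [] /=; case: ltgtP; auto. Qed.

Lemma tightest_lower_bound (I : eqType) (b : I -> R) (C : I -> bool)
    (lo : seq I) : lo != [::] ->
  exists2 p, p \in lo &
    forall t, b p < t ?<= if C p -> {in lo, forall q, b q < t ?<= if C q}.
Proof.
elim: lo => // a lo IH _.
have [-> | /IH [p plo pP]] := eqVneq lo [::].
  by exists a => [|t ta q]; rewrite ?mem_seq1 // => /eqP ->.
have [ap | pa] := lteif_total (b a) (b p) (C a) (C p).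
- exists p => [|t pt q]; first by rewrite inE plo orbT.
  rewrite inE => /predU1P [-> | /pP]; last exact.
  by apply: lteif_imply (lteif_trans ap pt); case: (C a) (C p) => [] [].
- exists a => [|t ta q]; first exact: mem_head.
  rewrite inE => /predU1P [-> // | qlo]; apply: pP qlo.
  by apply: lteif_imply (lteif_trans pa ta); case: (C a) (C p) => [] [].
Qed.

Lemma tightest_upper_bound (I : eqType) (b : I -> R) (C : I -> bool)
    (up : seq I) : up != [::] ->
  exists2 q, q \in up &
    forall t, t < b q ?<= if C q -> {in up, forall r, t < b r ?<= if C r}.
Proof.
move=> /(tightest_lower_bound (fun i => - b i) C) [q qup qP].
by exists q => // t tq r rup; rewrite -lteifN2 qP // lteifN2.
Qed.

Lemma lteif_interval (I : eqType) (b : I -> R) (C : I -> bool) (lo up : seq I) :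
  {in lo & up, forall p q, b p < b q ?<= if C p && C q} ->
  exists t, {in lo, forall p, b p < t ?<= if C p} /\
            {in up, forall q, t < b q ?<= if C q}.
Proof.
move=> lo_up.
have [-> | /(tightest_lower_bound b C) [p plo pP]] := eqVneq lo [::];
have [-> | /(tightest_upper_bound b C) [q qup qP]] := eqVneq up [::].
- by exists 0.
- by exists (b q - 1); split=> // r; apply: qP; rewrite lteifS // ltrBlDr ltrDl.
- by exists (b p + 1); split=> // r; apply: pP; rewrite lteifS // ltrDl.
have pq := lo_up p q plo qup.
have [lt_pq | le_qp] := ltrP (b p) (b q).
  exists ((b p + b q) / 2); split; [apply: pP | apply: qP];
    by rewrite lteifS // ?midf_lt.
have Cpq : C p && C q.
  by apply: contraTT pq => nCpq; rewrite lteifNF // nCpq.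
have [Cp Cq] := andP Cpq.
by exists (b p); split; [apply: pP | apply: qP]; rewrite ?lteifxx ?Cq -?Cpq.
Qed.

End Interval.

Section Motzkin.
Variable X : finType.

(* [(c, true)] stands for the weak constraint [0 <= sum_x c x * w x] and
   [(c, false)] for the strict one [0 < sum_x c x * w x]. *)
Definition constraint := ({ffun X -> int} * bool)%type.

Inductive cone (cs : seq constraint) : constraint -> Prop :=
| cone_mem c : c \in cs -> cone cs c
| coneD c d : cone cs c -> cone cs d -> cone cs (c.1 + d.1, c.2 && d.2)
| coneZ k c : 0 < k -> cone cs c -> cone cs (c.1 *~ k, c.2).

Definition refutable (cs : seq constraint) := cone cs (0, false).

Definition generated (cs : seq constraint) (c : constraint) :=
  exists2 l, {subset l <= cs} & c = (\sum_(d <- l) d.1, all snd l).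

Lemma generatedD cs c d : generated cs c -> generated cs d ->
  generated cs (c.1 + d.1, c.2 && d.2).
Proof.
move=> [l lcs ->] [m mcs ->]; exists (l ++ m); last by rewrite big_cat all_cat.
by move=> e; rewrite mem_cat => /orP [/lcs | /mcs].
Qed.

Lemma cone_generated cs c : cone cs c -> generated cs c.
Proof.
elim=> {c} [c ccs | c d _ gc _ gd | [] // n c n_gt0 _ gc].
- exists [:: c]; last by rewrite big_seq1 /= andbT -surjective_pairing.
  by move=> d; rewrite mem_seq1 => /eqP ->.
- exact: generatedD.
- case: n n_gt0 => // n _; rewrite -pmulrn; elim: n => [|n IH].
    by rewrite mulr1n -surjective_pairing.
  by rewrite mulrS -[c.2]andbb; exact: generatedD gc IH.
Qed.

Definition combine (j : X) (p q : constraint) : constraint :=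
  (p.1 *~ (- q.1 j) + q.1 *~ p.1 j, p.2 && q.2).

Lemma combine_pivot j p q : (combine j p q).1 j = 0.
Proof. by rewrite /= ffunE !ffunMzE !mulrzz mulrN mulrC addNr. Qed.

Definition elim_var (j : X) (cs : seq constraint) : seq constraint :=
  [seq c : constraint <- cs | c.1 j == 0] ++
  [seq combine j p q | p <- [seq c : constraint <- cs | 0 < c.1 j],
                       q <- [seq c : constraint <- cs | c.1 j < 0]].

Lemma elim_varP j cs c : c \in elim_var j cs ->
  (c \in cs /\ c.1 j = 0) \/
  exists p q, [/\ p \in cs, q \in cs, 0 < p.1 j, q.1 j < 0 & c = combine j p q].
Proof.
rewrite mem_cat mem_filter => /orP [/andP [/eqP cj ccs] | /allpairsP [[p q] /=]].
  by left.
by rewrite !mem_filter => -[/andP [pj pcs] /andP [qj qcs] ->]; right; exists p, q.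
Qed.

Lemma elim_var_pivot j cs :
  {in elim_var j cs, forall c : constraint, c.1 j = 0}.
Proof.
by move=> c /elim_varP [[] | [p [q [_ _ _ _ ->]]]] //; apply: combine_pivot.
Qed.

Lemma elim_var_vanish (j x : X) cs :
  {in cs, forall c : constraint, c.1 x = 0} ->
  {in elim_var j cs, forall c : constraint, c.1 x = 0}.
Proof.
move=> cs0 c /elim_varP [[/cs0] // | [p [q [pcs qcs _ _ ->]]]].
by rewrite /= ffunE !ffunMzE cs0 ?cs0 // !mul0rz addr0.
Qed.

Lemma cone_elim_var (j : X) cs c : cone (elim_var j cs) c -> cone cs c.
Proof.
elim=> {c} [c | c d _ cc _ cd | k c k_gt0 _ cc]; last 2 first.
- exact: coneD.
- exact: coneZ.
case/elim_varP => [[ccs _] | [p [q [pcs qcs pj qj ->]]]]; first exact: cone_mem.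
have Nqj : 0 < - q.1 j by rewrite oppr_gt0.
exact: coneD (coneZ Nqj (cone_mem pcs)) (coneZ pj (cone_mem qcs)).
Qed.

Variable R : realFieldType.

Definition dot (c : {ffun X -> int}) (w : X -> R) := \sum_x (c x)%:~R * w x.

Lemma dotD (c d : {ffun X -> int}) (w : X -> R) :
  dot (c + d) w = dot c w + dot d w.
Proof.
by rewrite /dot -big_split; apply: eq_bigr => x _; rewrite ffunE intrD mulrDl.
Qed.

Lemma dotB (c d : {ffun X -> int}) (w : X -> R) :
  dot (c - d) w = dot c w - dot d w.
Proof.
by rewrite /dot -sumrB; apply: eq_bigr => x _; rewrite !ffunE intrB mulrBl.
Qed.

Lemma dotMz (c : {ffun X -> int}) (k : int) (w : X -> R) :
  dot (c *~ k) w = dot c w * k%:~R.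
Proof.
rewrite /dot mulr_suml; apply: eq_bigr => x _.
by rewrite ffunMzE mulrzz intrM mulrAC.
Qed.

Definition satisfies (w : X -> R) (c : constraint) := 0 < dot c.1 w ?<= if c.2.

Definition update (w : X -> R) (j : X) (t : R) x := if x == j then t else w x.

Definition threshold (j : X) (w : X -> R) (c : constraint) :=
  w j - dot c.1 w / (c.1 j)%:~R.

Lemma dot_update (c : {ffun X -> int}) (w : X -> R) (j : X) (t : R) :
  dot c (update w j t) = dot c w + (c j)%:~R * (t - w j).
Proof.
rewrite /dot (bigD1 j) // [in RHS](bigD1 j) //= /update eqxx.
by rewrite (eq_bigr (fun x => (c x)%:~R * w x)) => [|x /negbTE -> //]; ring.
Qed.

Lemma dot_update_threshold (c : constraint) (w : X -> R) (j : X) (t : R) :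
  c.1 j != 0 -> dot c.1 (update w j t) = (c.1 j)%:~R * (t - threshold j w c).
Proof. by move=> cj; rewrite dot_update /threshold; field; rewrite intr_eq0. Qed.

Lemma satisfies_update_eq0 (c : constraint) (w : X -> R) (j : X) (t : R) :
  c.1 j = 0 ->
  satisfies (update w j t) c = satisfies w c.
Proof. by move=> cj; rewrite /satisfies dot_update cj mul0r addr0. Qed.

Lemma satisfies_update_gt0 (c : constraint) (w : X -> R) (j : X) (t : R) :
  0 < c.1 j ->
  satisfies (update w j t) c = (threshold j w c < t ?<= if c.2).
Proof.
move=> cj; rewrite /satisfies dot_update_threshold ?gt_eqF //.
by rewrite -(mulr0 (c.1 j)%:~R) lteif_pM2l ?ltr0z // subr_lteif0r.
Qed.

Lemma satisfies_update_lt0 (c : constraint) (w : X -> R) (j : X) (t : R) :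
  c.1 j < 0 ->
  satisfies (update w j t) c = (t < threshold j w c ?<= if c.2).
Proof.
move=> cj; rewrite /satisfies dot_update_threshold ?lt_eqF //.
by rewrite -(mulr0 (c.1 j)%:~R) lteif_nM2l ?ltrz0 // subr_lteifr0.
Qed.

Lemma satisfies_combine (j : X) (p q : constraint) (w : X -> R) :
  0 < p.1 j -> q.1 j < 0 ->
  satisfies w (combine j p q) =
  (threshold j w p < threshold j w q ?<= if p.2 && q.2).
Proof.
move=> pj qj; rewrite /satisfies.
have pq_gt0 : 0 < (p.1 j)%:~R * (- q.1 j)%:~R :> R.
  by rewrite mulr_gt0 ?ltr0z ?oppr_gt0.
have -> : dot (combine j p q).1 w =
    (p.1 j)%:~R * (- q.1 j)%:~R * (threshold j w q - threshold j w p).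
  rewrite dotD !dotMz /threshold intrN.
  by field; rewrite !intr_eq0 gt_eqF ?lt_eqF.
by rewrite -[E in E < _ ?<= if _](mulr0 ((p.1 j)%:~R * (- q.1 j)%:~R))
  lteif_pM2l // subr_lteif0r.
Qed.

Lemma elim_var_extend (j : X) (cs : seq constraint) (w : X -> R) :
  {in elim_var j cs, forall c, satisfies w c} ->
  exists t, {in cs, forall c, satisfies (update w j t) c}.
Proof.
move=> wP; pose pos := [seq c : constraint <- cs | 0 < c.1 j].
pose neg := [seq c : constraint <- cs | c.1 j < 0].
have [|t [tpos tneg]] :=
  lteif_interval (b := threshold j w) (C := snd) (lo := pos) (up := neg).
  move=> p q pP qP; rewrite -satisfies_combine.
  - by apply: wP; rewrite mem_cat (allpairs_f (combine j)) ?orbT.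
  - by move: pP; rewrite mem_filter => /andP [].
  - by move: qP; rewrite mem_filter => /andP [].
exists t => c ccs; have [cj | cj | cj] := ltrgtP (c.1 j) 0.
- by rewrite satisfies_update_lt0 //; apply: tneg; rewrite mem_filter cj.
- by rewrite satisfies_update_gt0 //; apply: tpos; rewrite mem_filter cj.
- rewrite satisfies_update_eq0 //; apply: wP.
  by rewrite mem_cat mem_filter cj eqxx ccs.
Qed.

Lemma motzkin_transposition_on (s : seq X) (cs : seq constraint) :
  (forall c x, c \in cs -> x \notin s -> c.1 x = 0) ->
  ~ refutable cs -> exists w, {in cs, forall c, satisfies w c}.
Proof.
elim: s cs => [|j s IH] cs cs_s cs_consistent.
  exists (fun=> 0) => c ccs.
  have c0 : c.1 = 0 by apply/ffunP => x; rewrite ffunE cs_s.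
  case: c ccs c0 => c [] ccs /= c0.
    by rewrite /satisfies /dot big1 ?lteifxx // => x _; rewrite mulr0.
  by case: cs_consistent; rewrite /refutable -c0; apply: cone_mem.
have [w wP] : exists w, {in elim_var j cs, forall c, satisfies w c}.
  apply: IH => [c x cel xs | /cone_elim_var/cs_consistent //].
  have [-> | xj] := eqVneq x j; first exact: elim_var_pivot cel.
  apply: elim_var_vanish cel => d dcs.
  by apply: cs_s dcs _; rewrite in_cons negb_or xj.
have [t tP] := elim_var_extend wP.
by exists (update w j t).
Qed.

Theorem motzkin_transposition (cs : seq constraint) :
  ~ refutable cs -> exists w, {in cs, forall c, satisfies w c}.
Proof.
by apply: (motzkin_transposition_on (s := enum X)) => c x _; rewrite mem_enum.
Qed.

End Motzkin.

Lemma card_nth_count (T : Type) (x0 : T) (a : pred T) (s : seq T) n :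
  size s = n -> #|[set i : 'I_n | a (nth x0 s i)]| = count a s.
Proof. by move<-; rewrite -sum1_count (big_nth x0) big_mkord sum1dep_card. Qed.

Section Plausibility.
Variables (X : finType) (Sigma : {set {set X}}).
Variables (disp : Order.disp_t) (D : porderType disp) (Pl : {set X} -> D).

Definition is_event (A : {set X}) := [exists T in Sigma, A \subset T].

Lemma is_eventP A : reflect (event Sigma A) (is_event A).
Proof.
apply: (iffP existsP) => [[T /andP [TS AT]] | [T TS AT]]; first by exists T.
by exists T; rewrite TS AT.
Qed.

Definition ordered_events :=
  [pred p : {set X} * {set X} |
     [&& is_event p.1, is_event p.2 & Pl p.1 <= Pl p.2]%O].

Definition balanced (s : seq ({set X} * {set X})) :=
  forall x, count (fun p : {set X} * {set X} => x \in p.1) s =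
            count (fun p : {set X} * {set X} => x \in p.2) s.

Lemma archimedean_balanced s p0 : archimedean Sigma Pl ->
  {subset s <= ordered_events} -> balanced s -> p0 \in s ->
  (Pl p0.2 <= Pl p0.1)%O.
Proof.
move=> arch s_ord s_bal p0s; set t := rcons (rem p0 s) p0.
have st : perm_eq s t by rewrite perm_sym perm_rcons perm_sym perm_to_rem.
have t_ord i : nth p0 t i \in ordered_events.
  have [it | ti] := ltnP i (size t); last by rewrite nth_default // s_ord.
  by apply: s_ord; rewrite (perm_mem st) mem_nth.
have size_t : size t = (size (rem p0 s)).+1 by rewrite size_rcons.
have t_last : nth p0 t (size (rem p0 s)) = p0 by rewrite nth_rcons ltnn eqxx.
have := arch _ (fun i : 'I_(size (rem p0 s)).+1 => (nth p0 t i).1)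
  (fun i => (nth p0 t i).2).
rewrite t_last; apply=> [i | i | x | i _].
- by apply/is_eventP; case/and3P: (t_ord i).
- by apply/is_eventP; case/and3P: (t_ord i).
- rewrite (card_nth_count p0 (fun p : _ * _ => x \in p.1) size_t).
  rewrite (card_nth_count p0 (fun p : _ * _ => x \in p.2) size_t).
  by rewrite -!(permP st) s_bal.
- by case/and3P: (t_ord i).
Qed.

Definition indicator (A : {set X}) : {ffun X -> int} := [ffun x => (x \in A)%:Z].

(* For [p = (A, B)]: [mu A <= mu B], weak exactly when [Pl B <= Pl A] too. *)
Definition pl_constraint (p : {set X} * {set X}) : constraint X :=
  (indicator p.2 - indicator p.1, Pl p.2 <= Pl p.1)%O.

Definition pl_constraints := [seq pl_constraint p | p in ordered_events].

Lemma sum_indicator (s : seq ({set X} * {set X})) (f : _ -> {set X}) x :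
  \sum_(p <- s) indicator (f p) x = (count (fun p => x \in f p) s)%:Z.
Proof.
elim: s => [|p s IH]; first by rewrite big_nil.
by rewrite big_cons IH ffunE /=; case: (x \in f p); rewrite ?add0r // addrC.
Qed.

Lemma archimedean_not_refutable :
  archimedean Sigma Pl -> ~ refutable pl_constraints.
Proof.
move=> arch /cone_generated [l l_sub [sum0 weak]].
have [P P_ord l_P] := iffLR (subset_mapP _ _ _) l_sub.
have {}P_ord : {subset P <= ordered_events}.
  by move=> p /(allP P_ord) /=; rewrite mem_enum.
rewrite {}l_P all_map in sum0 weak.
have /allPn [p0 p0P strict] : ~~ all (snd \o pl_constraint) P by rewrite -weak.
have P_bal : balanced P.
  move=> x; rewrite big_map /pl_constraint /= sumrB in sum0.
  move/(congr1 (fun c : {ffun X -> int} => c x)): sum0.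
  rewrite !ffunE !sum_ffunE !sum_indicator => /eqP.
  by rewrite eq_sym subr_eq0 => /eqP [].
by move: strict; rewrite /= (archimedean_balanced arch P_ord P_bal p0P).
Qed.

Lemma ordered_eventsE A B : event Sigma A -> event Sigma B ->
  ((A, B) \in ordered_events) = (Pl A <= Pl B)%O.
Proof. by move=> /is_eventP eA /is_eventP eB; rewrite inE /= eA eB. Qed.

Variable R : realFieldType.

Lemma dot_indicator (w : X -> R) A : dot (indicator A) w = measure_of w A.
Proof.
rewrite /dot /measure_of [RHS]big_mkcond; apply: eq_bigr => x _.
by rewrite ffunE; case: (x \in A); rewrite ?mul1r ?mul0r.
Qed.

Lemma satisfies_pl_constraint (w : X -> R) p :
  satisfies w (pl_constraint p) =
  (measure_of w p.1 < measure_of w p.2 ?<= if (Pl p.2 <= Pl p.1)%O).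
Proof. by rewrite /satisfies dotB !dot_indicator subr_lteif0r. Qed.

Lemma pl_constraints_agree (w : X -> R) : image_total Sigma Pl ->
  {in pl_constraints, forall c, satisfies w c} -> agrees Sigma Pl w.
Proof.
move=> total wP A B eA eB.
have sat C1 C2 : event Sigma C1 -> event Sigma C2 -> (Pl C1 <= Pl C2)%O ->
    measure_of w C1 < measure_of w C2 ?<= if (Pl C2 <= Pl C1)%O.
  move=> e1 e2 le12; rewrite -(satisfies_pl_constraint _ (C1, C2)); apply: wP.
  by apply: map_f; rewrite mem_enum ordered_eventsE.
split=> [/(sat _ _ eA eB)/lteifW // | le_mAB].
have [// | le_BA] := total A B eA eB.
have [// | nle_AB] := boolP (Pl A <= Pl B)%O.
by move: (sat _ _ eB eA le_BA); rewrite (negbTE nle_AB) /= ltNge le_mAB.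
Qed.

Lemma agrees_prob_measure (w : X -> R) : test_space Sigma ->
  plausibility Sigma Pl -> agrees Sigma Pl w ->
  exists mu : X -> R, prob_measure Sigma mu /\ agrees Sigma Pl mu.
Proof.
move=> cover [Pl_tests [Pl_mono Pl_pos]] w_agrees.
have measure0 : measure_of w set0 = 0 by rewrite /measure_of big_set0.
have w_ge0 x : 0 <= w x.
  have /bigcupP [T TS xT] : x \in \bigcup_(T in Sigma) T by rewrite cover inE.
  have e0 : event Sigma set0 by exists T; rewrite ?sub0set.
  have e1 : event Sigma [set x] by exists T; rewrite ?sub1set.
  have -> : w x = measure_of w [set x] by rewrite /measure_of big_set1.
  rewrite -measure0; apply/w_agrees => //.
  by apply: Pl_mono; rewrite ?sub0set.
have [Sigma0 | [T0 T0S]] := set_0Vmem Sigma.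
  by exists w; split=> //; split=> // T; rewrite Sigma0 inE.
have eT T : T \in Sigma -> event Sigma T by exists T.
have e0 : event Sigma set0 by exists T0; rewrite ?sub0set.
pose k := measure_of w T0.
have k_gt0 : 0 < k.
  rewrite -measure0 ltNge; apply/negP => /(w_agrees _ _ (eT _ T0S) e0).
  by apply/negP; rewrite lt_geF ?Pl_pos.
have measure_scale A : measure_of (fun x => w x / k) A = measure_of w A / k.
  by rewrite /measure_of mulr_suml.
exists (fun x => w x / k); split; first split.
- by move=> x; rewrite divr_ge0 ?w_ge0 ?ltW.
- move=> T TS; rewrite -/(measure_of _ T) measure_scale.
  have -> : measure_of w T = k.
    apply/le_anti/andP; split.
      by apply/(w_agrees _ _ (eT _ TS) (eT _ T0S)); rewrite (Pl_tests T T0).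
    by apply/(w_agrees _ _ (eT _ T0S) (eT _ TS)); rewrite (Pl_tests T T0).
  by rewrite divff ?gt_eqF.
- move=> A B eA eB; rewrite !measure_scale ler_pM2r ?invr_gt0 //.
  exact: w_agrees.
Qed.

Lemma agrees_image_total (mu : X -> R) :
  agrees Sigma Pl mu -> image_total Sigma Pl.
Proof.
move=> mu_agrees A B eA eB.
by case: (lerP (measure_of mu A) (measure_of mu B)) => [|/ltW] le;
  [left | right]; apply/mu_agrees.
Qed.

Lemma sum_measure_of (I : finType) (mu : X -> R) (F : I -> {set X}) :
  \sum_i measure_of mu (F i) = \sum_x #|[set i | x \in F i]|%:R * mu x.
Proof.
under eq_bigr do rewrite /measure_of big_mkcond.
rewrite exchange_big; apply: eq_bigr => x _.
rewrite -sum1dep_card natr_sum mulr_suml [RHS]big_mkcond; apply: eq_bigr => i _.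
by case: (x \in F i); rewrite ?mul1r ?mul0r.
Qed.

Lemma agrees_archimedean (mu : X -> R) :
  agrees Sigma Pl mu -> archimedean Sigma Pl.
Proof.
move=> mu_agrees n A B eA eB card_AB le_AB.
apply/(mu_agrees _ _ (eB ord_max) (eA ord_max)).
have sum_AB : \sum_i measure_of mu (A i) = \sum_i measure_of mu (B i).
  by rewrite !sum_measure_of; apply: eq_bigr => x _; rewrite card_AB.
have : \sum_(i | i != ord_max) measure_of mu (A i) <=
       \sum_(i | i != ord_max) measure_of mu (B i).
  by apply: ler_sum => i /le_AB /(mu_agrees _ _ (eA i) (eB i)).
by move: sum_AB; rewrite (bigD1 ord_max) //= [RHS](bigD1 ord_max) //=; lra.
Qed.

End Plausibility.

Theorem theorem3 (R : realFieldType) (X : finType) (Sigma : {set {set X}})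
    (disp : Order.disp_t) (D : porderType disp) (Pl : {set X} -> D) :
  test_space Sigma -> plausibility Sigma Pl ->
  ((exists mu : X -> R, prob_measure Sigma mu /\ agrees Sigma Pl mu) <->
   (image_total Sigma Pl /\ archimedean Sigma Pl)).
Proof.
move=> cover Pl_plaus; split=> [[mu [_ mu_agrees]] | [total arch]].
  split; first exact: agrees_image_total mu_agrees.
  exact: agrees_archimedean mu_agrees.
have [w wP] := motzkin_transposition R (archimedean_not_refutable arch).
exact: agrees_prob_measure cover Pl_plaus (pl_constraints_agree total wP).
Qed.
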